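(* Let $\lambda\in\mathbb{R}$, let $r,n\ge1$ be integers and let $0\le k\le nr$. Then \[ S_\lambda^{(r,r)}(n,k)=\frac{(-1)^k}{k!}\sum_{p=0}^{k}(-1)^p\binom{k}{p}\big((p)_r\big)_{n,\lambda}. \]
   Context: Notation: $(x)_0=1$, $(x)_m=x(x-1)\cdots(x-m+1)$ for $m\ge1$; the generalized (degenerate) falling factorial is $(y)_{0,\lambda}=1$, $(y)_{n,\lambda}=y(y-\lambda)\cdots(y-(n-1)\lambda)$ for $n\ge1$. Let $D=\frac{d}{dx}$ and let $x$ also denote multiplication by $x$. The numbers $S_\lambda^{(r,r)}(n,k)$, $0\le k\le nr$ (generalized degenerate $(r,r)$-Stirling numbers of the second kind) are defined by the operator identity \[ \prod_{j=0}^{n-1}\Big(x^{r}D^{r}-j\lambda\Big)=\sum_{k=0}^{nr}S_\lambda^{(r,r)}(n,k)\,x^{k}D^{k}. \] *)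

From mathcomp Require Import all_boot all_order all_algebra.
Set Implicit Arguments. Unset Strict Implicit. Unset Printing Implicit Defensive.
Import Order.TTheory GRing.Theory Num.Theory.
Local Open Scope ring_scope.

Definition gen_falling (R : nzRingType) (lam y : R) (n : nat) : R :=
  \prod_(i < n) (y - i%:R * lam).

Definition xkDk (R : nzRingType) (k : nat) (p : {poly R}) : {poly R} :=
  'X^k * p^`(k).

Definition opL (R : nzRingType) (r : nat) (lam : R) (j : nat) (p : {poly R})
  : {poly R} := xkDk r p - (j%:R * lam) *: p.

(* The composed operator prod_{j=0}^{n-1} (x^r D^r - j lambda)
   = L_0 o L_1 o ... o L_{n-1}  (the factors commute). *)
Fixpoint opProd (R : nzRingType) (r : nat) (lam : R) (n : nat) (p : {poly R})
  : {poly R} :=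
  match n with
  | 0 => p
  | m.+1 => opProd r lam m (opL r lam m p)
  end.

(* c : nat -> R is a family of coefficients S(n,k), 0 <= k <= n r, satisfying
   the defining operator identity of the generalized degenerate (r,r)-Stirling
   numbers of the second kind (as operators on polynomials). *)
Definition is_Srr (R : nzRingType) (lam : R) (r n : nat) (c : nat -> R) : Prop :=
  forall p : {poly R},
    opProd r lam n p = \sum_(k < (n * r).+1) c k *: xkDk k p.

(* The operator x^k D^k multiplies X^i by the falling factorial (i)_k, so the
   operator identity says exactly that ((i)_r)_{n,lambda} = sum_k S(n,k) (i)_k
   for every i.  Since (i)_k = C(i,k) k!, on 0 <= i <= nr this is a binomial
   transform of the sequence k! S(n,k), and binomial inversion gives the
   formula.  Conversely, i |-> ((i)_r)_{n,lambda} is a polynomial of degree at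
   most nr (a polynomial of degree n composed with one of degree r), so an
   expansion valid at the nr + 1 points 0, ..., nr holds for every i. *)

From mathcomp Require Import all_boot all_algebra ring.
Set Implicit Arguments. Unset Strict Implicit. Unset Printing Implicit Defensive.
Import GRing.Theory Num.Theory.
Local Open Scope ring_scope.

Section Operators.
Variables (R : nzRingType) (r : nat) (lam : R).

Lemma coef_xkDk k (p : {poly R}) i : (xkDk k p)`_i = (i ^_ k)%:R * p`_i.
Proof.
rewrite /xkDk coefXnM; case: ltnP => [ik | ki].
  by rewrite ffact_small ?mul0r.
by rewrite coef_derivn subnKC // mulr_natl.
Qed.

Lemma coef_opL j (p : {poly R}) i :
  (opL r lam j p)`_i = ((i ^_ r)%:R - j%:R * lam) * p`_i.
Proof. by rewrite coefB coef_xkDk coefZ mulrBl. Qed.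

Lemma coef_opProd n (p : {poly R}) i :
  (opProd r lam n p)`_i = gen_falling lam (i ^_ r)%:R n * p`_i.
Proof.
elim: n p => [|n IHn] p /=; first by rewrite /gen_falling big_ord0 mul1r.
by rewrite IHn coef_opL /gen_falling big_ord_recr mulrA.
Qed.

Lemma is_SrrE n c : is_Srr lam r n c <->
  forall i, gen_falling lam (i ^_ r)%:R n
              = \sum_(k < (n * r).+1) c k * (i ^_ k)%:R.
Proof.
split=> [Sc i | Sc p].
  have := congr1 (fun q : {poly R} => q`_i) (Sc 'X^i).
  rewrite /= coef_opProd coefXn eqxx mulr1 coef_sum => ->.
  by apply: eq_bigr => k _; rewrite coefZ coef_xkDk coefXn eqxx mulr1.
apply/polyP=> i; rewrite coef_opProd Sc coef_sum mulr_suml.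
by apply: eq_bigr => k _; rewrite coefZ coef_xkDk mulrA.
Qed.

End Operators.

Lemma big_ord_widen_vanishing (V : nmodType) m n (F : nat -> V) :
  (m <= n)%N -> (forall i, (m <= i)%N -> F i = 0) ->
  \sum_(i < m) F i = \sum_(i < n) F i.
Proof.
move=> mn F0; rewrite (big_ord_widen n F mn) big_mkcond /=.
by apply: eq_bigr => i _; case: ltnP => // /F0.
Qed.

Lemma big_ord_delta (V : nzRingType) (F : nat -> V) k n : (k < n)%N ->
  \sum_(j < n) F j * (j == k :> nat)%:R = F k.
Proof.
move=> kn; rewrite (bigD1 (Ordinal kn)) //= eqxx mulr1 big1 ?addr0 // => j.
by rewrite -val_eqE => /negPf ->; rewrite mulr0.
Qed.

Section BinomialInversion.
Variable R : comNzRingType.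

Lemma coefXD1n n j : ((('X : {poly R}) + 1) ^+ n)`_j = 'C(n, j)%:R.
Proof.
elim: n j => [|n IHn] j; first by rewrite expr0 coef1; case: j.
rewrite exprSr mulrDr mulr1 coefD coefMX.
by case: j => [|j] /=; rewrite !IHn ?add0r ?bin0 // binS natrD addrC.
Qed.

(* The coefficient of X^j in (1 - (X + 1))^m = (-X)^m. *)
Lemma sum_sign_binom_binom m j :
  \sum_(p < m.+1) (-1) ^+ p * 'C(m, p)%:R * 'C(p, j)%:R
    = (-1) ^+ m * (j == m)%:R :> R.
Proof.
have E : (-1) ^+ m *: 'X^m
    = \sum_(p < m.+1) ((-1) ^+ p *: ('X + 1) ^+ p) *+ 'C(m, p) :> {poly R}.
  rewrite -exprZn; under eq_bigr do rewrite -exprZn.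
  by rewrite -exprD1n !scaleN1r opprD subrK.
have := congr1 (fun q : {poly R} => q`_j) E.
rewrite coefZ coefXn coef_sum => ->; apply: eq_bigr => p _.
by rewrite coefMn coefZ coefXD1n mulrAC; apply: mulr_natr.
Qed.

Lemma sum_sign_binom_transform (g : nat -> R) m :
  \sum_(k < m.+1) (-1) ^+ k * 'C(m, k)%:R * \sum_(p < k.+1) 'C(k, p)%:R * g p
    = (-1) ^+ m * g m.
Proof.
transitivity (\sum_(k < m.+1) \sum_(p < m.+1)
                (-1) ^+ k * 'C(m, k)%:R * 'C(k, p)%:R * g p).
  apply: eq_bigr => k _; rewrite mulr_sumr.
  rewrite (big_ord_widen_vanishing
    (F := fun p => _ * ('C(k, p)%:R * g p)) (ltn_ord k)).
    by apply: eq_bigr => p _; rewrite mulrA.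
  by move=> p kp; rewrite (bin_small kp) mul0r mulr0.
rewrite exchange_big /=.
under eq_bigr => p _ do rewrite -mulr_suml sum_sign_binom_binom mulrAC.
exact: (big_ord_delta (fun p => (-1) ^+ m * g p)).
Qed.

Lemma binomial_inversion (a b : nat -> R) N :
  (forall m, (m <= N)%N -> b m = \sum_(k < m.+1) 'C(m, k)%:R * a k) <->
  (forall k, (k <= N)%N ->
     a k = (-1) ^+ k * \sum_(p < k.+1) (-1) ^+ p * 'C(k, p)%:R * b p).
Proof.
split=> [Eb k kN | Ea m mN].
  rewrite -[LHS](signrMK k) -sum_sign_binom_transform; congr (_ * _).
  apply: eq_bigr => p _; rewrite Eb //.
  by apply: leq_trans kN; rewrite -ltnS.
rewrite -[LHS](signrMK m).
rewrite -(sum_sign_binom_transform (fun p => (-1) ^+ p * b p)).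
apply: eq_bigr => k _; rewrite Ea; last by apply: leq_trans mN; rewrite -ltnS.
rewrite !mulr_sumr; apply: eq_bigr => p _; ring.
Qed.

End BinomialInversion.

Lemma ffact_expansion_inversion (R : numFieldType) (f c : nat -> R) N :
  (forall m, (m <= N)%N -> f m = \sum_(k < N.+1) c k * (m ^_ k)%:R) <->
  (forall k, (k <= N)%N ->
     c k = (-1) ^+ k / k`!%:R * \sum_(p < k.+1) (-1) ^+ p * 'C(k, p)%:R * f p).
Proof.
have fact_neq0 k : k`!%:R != 0 :> R by rewrite pnatr_eq0 -lt0n fact_gt0.
have sum_ffactE m : (m <= N)%N -> \sum_(k < N.+1) c k * (m ^_ k)%:R
    = \sum_(k < m.+1) 'C(m, k)%:R * (c k * k`!%:R).
  move=> mN; rewrite (big_ord_widen_vanishing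
    (F := fun k => 'C(m, k)%:R * (c k * k`!%:R)) (mN : m.+1 <= N.+1)%N).
    by apply: eq_bigr => k _; rewrite -bin_ffact natrM mulrCA mulrA.
  by move=> k mk; rewrite bin_small ?mul0r.
transitivity (forall m, (m <= N)%N ->
                f m = \sum_(k < m.+1) 'C(m, k)%:R * (c k * k`!%:R)).
  by split=> Ef m mN; rewrite Ef // sum_ffactE.
apply: (iff_trans (binomial_inversion (fun k => c k * k`!%:R) f N)).
split=> Ec k kN.
  by rewrite mulrAC -Ec // mulfK.
by rewrite Ec // mulrAC divfK.
Qed.

Definition gen_falling_poly (R : nzRingType) (lam : R) n : {poly R} :=
  \prod_(i < n) ('X - (i%:R * lam)%:P).

Lemma size_gen_falling_poly (R : nzRingType) (lam : R) n :
  size (gen_falling_poly lam n) = n.+1.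
Proof. by rewrite size_prod_XsubC /index_enum -enumT size_enum_ord. Qed.

Lemma horner_gen_falling_poly (R : comNzRingType) (lam y : R) n :
  (gen_falling_poly lam n).[y] = gen_falling lam y n.
Proof. by rewrite horner_prod; apply: eq_bigr => i _; rewrite hornerXsubC. Qed.

Lemma gen_falling1_ffact (R : nzRingType) m k :
  gen_falling 1 m%:R k = (m ^_ k)%:R :> R.
Proof.
elim: k => [|k IHk]; first by rewrite /gen_falling big_ord0.
rewrite /gen_falling big_ord_recr /= -/(gen_falling _ _ _) IHk mulr1.
rewrite ffactnSr natrM.
case: (leqP k m) => [km | mk]; first by rewrite natrB.
by rewrite (ffact_small mk) !mul0r.
Qed.

Lemma poly_eq_on_nats (R : numDomainType) (p q : {poly R}) N :
  (size p <= N.+1)%N -> (size q <= N.+1)%N ->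
  (forall m, (m <= N)%N -> p.[m%:R] = q.[m%:R]) -> p = q.
Proof.
move=> sp sq Epq; apply/eqP; rewrite -subr_eq0; apply/eqP.
apply: (@roots_geq_poly_eq0 _ _ [seq m%:R | m <- iota 0 N.+1]).
- apply/allP => x /mapP [m]; rewrite mem_iota ltnS => /andP[_ mN] ->.
  by rewrite /root hornerD hornerN Epq // subrr.
- by rewrite map_inj_uniq ?iota_uniq // => ? ? /eqP; rewrite eqr_nat => /eqP.
- rewrite size_map size_iota (leq_trans (size_polyD _ _)) //.
  by rewrite size_polyN geq_max sp sq.
Qed.

Lemma poly_ffact_expansion_ext (R : numDomainType) (p : {poly R})
    (c : nat -> R) N :
  (size p <= N.+1)%N ->
  (forall m, (m <= N)%N -> p.[m%:R] = \sum_(k < N.+1) c k * (m ^_ k)%:R) ->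
  forall m, p.[m%:R] = \sum_(k < N.+1) c k * (m ^_ k)%:R.
Proof.
move=> sp Ep.
pose q := \sum_(k < N.+1) c k *: gen_falling_poly 1 k.
have Eq m : q.[m%:R] = \sum_(k < N.+1) c k * (m ^_ k)%:R.
  rewrite horner_sum; apply: eq_bigr => k _.
  by rewrite hornerZ horner_gen_falling_poly gen_falling1_ffact.
have sq : (size q <= N.+1)%N.
  rewrite (leq_trans (size_sum _ _ _)) //; apply/bigmax_leqP => k _.
  by rewrite (leq_trans (size_scale_leq _ _)) // size_gen_falling_poly.
by move=> m; rewrite -Eq (poly_eq_on_nats sp sq) // => i iN; rewrite Ep ?Eq.
Qed.

Theorem theorem5 (R : realFieldType) (lam : R) (r n : nat)
  (hr : (1 <= r)%N) (hn : (1 <= n)%N) (c : nat -> R) :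
  is_Srr lam r n c <->
  (forall k : nat, (k <= n * r)%N ->
     c k = (-1) ^+ k / (k`!)%:R *
           \sum_(p < k.+1) (-1) ^+ p * ('C(k, p))%:R *
                           gen_falling lam ((p ^_ r)%:R) n).
Proof.
pose F := gen_falling_poly lam n \Po gen_falling_poly 1 r.
have EF i : F.[i%:R] = gen_falling lam (i ^_ r)%:R n.
  by rewrite horner_comp !horner_gen_falling_poly gen_falling1_ffact.
have sF : (size F <= (n * r).+1)%N.
  by rewrite (leq_trans (size_comp_poly_leq _ _)) // !size_gen_falling_poly.
apply: (iff_trans (is_SrrE _ _ _ _)).
apply: iff_trans
  (ffact_expansion_inversion (fun i => gen_falling lam (i ^_ r)%:R n) c _).
split=> [Ef m _ | Ef i]; first exact: Ef.
by rewrite -EF; apply: poly_ffact_expansion_ext sF _ i => m mN; rewrite EF Ef.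
Qed.
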